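(* Let $(X,T)$ be a dynamical system and $\mathcal{F}$ a family admitting a countable base. Then $\mathrm{Tran}_{k\mathcal{F}}(X,T)$ is a $G_\delta$ subset of $X$. Moreover, the following are equivalent: (1) $(X,T)$ is $k\mathcal{F}$-transitive; (2) $\mathrm{Tran}_{k\mathcal{F}}(X,T)$ is a dense $G_\delta$ subset of $X$; (3) $\mathrm{Tran}_{k\mathcal{F}}(X,T)\neq\varnothing$.
   Context: A dynamical system $(X,T)$: $X$ is a compact metric space with more than one point and without isolated points, $T:X\to X$ a continuous surjection. A family is a collection of subsets of $\mathbb{Z}_+$ that is hereditary upward. A countable base of $\mathcal{F}$ is a countable $\mathcal{H}\subset\mathcal{F}$ such that every $F\in\mathcal{F}$ contains some $H\in\mathcal{H}$. The dual family is $k\mathcal{F}=\{F\subset\mathbb{Z}_+:F\cap F'\neq\varnothing\ \forall F'\in\mathcal{F}\}$. ''Opene'' means open and nonempty. $n_T(x,U)=\{n\in\mathbb{Z}_+:T^nx\in U\}$, $N_T(U,V)=\{n\in\mathbb{Z}_+:U\cap T^{-n}V\neq\varnothing\}$. For a family $\mathcal{G}$, $\mathrm{Tran}_{\mathcal{G}}(X,T)=\{x\in X:n_T(x,U)\in\mathcal{G}\text{ for every opene }U\}$, and $(X,T)$ is $\mathcal{G}$-transitive if $N_T(U,V)\in\mathcal{G}$ for all opene $U,V$. *)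

From HB Require Import structures.
From mathcomp Require Import all_boot all_order all_algebra.
From mathcomp Require Import all_classical all_reals.
From mathcomp Require Import topology normedtype borel_hierarchy.
Set Implicit Arguments. Unset Strict Implicit. Unset Printing Implicit Defensive.
Import Order.TTheory GRing.Theory Num.Theory.
Local Open Scope classical_set_scope.

(* Z_+ = {0,1,2,...} is modelled by nat. *)

Definition is_family (F : set (set nat)) : Prop :=
  forall A B : set nat, A `<=` B -> F A -> F B.

Definition has_countable_base (F : set (set nat)) : Prop :=
  exists H : set (set nat),
    countable H /\ H `<=` F /\ (forall A, F A -> exists2 B, H B & B `<=` A).

Definition kfam (F : set (set nat)) : set (set nat) :=
  [set A | forall B, F B -> A `&` B !=set0].

Definition opene {X : topologicalType} (U : set X) : Prop := open U /\ U !=set0.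

Definition n_T {X : Type} (T : X -> X) (x : X) (U : set X) : set nat :=
  [set n | U (iter n T x)].

Definition N_T {X : Type} (T : X -> X) (U V : set X) : set nat :=
  [set n | U `&` (iter n T @^-1` V) !=set0].

Definition Tran {X : topologicalType} (G : set (set nat)) (T : X -> X) : set X :=
  [set x | forall U : set X, opene U -> G (n_T T x U)].

Definition G_transitive {X : topologicalType} (G : set (set nat)) (T : X -> X) : Prop :=
  forall U V : set X, opene U -> opene V -> G (N_T T U V).

(* The metric space is a pseudometric
   space over a real type which is Hausdorff (hence a metric space). *)
Definition dyn_system {R : realType} (X : pseudoMetricType R) (T : X -> X) : Prop :=
  [/\ hausdorff_space X /\ compact [set: X],
      (exists x y : X, x <> y),
      (forall x : X, ~ open [set x]),
      continuous T & (forall y : X, exists x, T x = y)].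

From HB Require Import structures.
From mathcomp Require Import all_boot all_order all_algebra.
From mathcomp Require Import all_classical all_reals interval_inference.
From mathcomp Require Import topology normedtype borel_hierarchy.
Set Implicit Arguments. Unset Strict Implicit. Unset Printing Implicit Defensive.
Import Order.TTheory GRing.Theory Num.Theory.
Local Open Scope classical_set_scope.

(* Fix countable bases (V_i) of the opene sets and (B_j) of F.  A point x lies
   in Tran_{kF} iff for all i, j its orbit visits V_i at some time in B_j, so
   Tran_{kF} is the countable intersection of the open sets [hits V_i B_j].
   Under kF-transitivity each of these is dense, and Baire's theorem for the
   compact space X makes Tran_{kF} dense.  Conversely Tran_G is T-invariant,
   so one transitive point x yields the dense orbit of x inside Tran_G; and a
   dense Tran_G gives G-transitivity because n_T(x,V) is contained in
   N_T(U,V) whenever x is in U. *)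

Lemma bigcap_countable_nat {T I : Type} (P : set T -> Prop) (D : set I)
    (f : I -> set T) :
  P setT -> countable D -> (forall i, D i -> P (f i)) ->
  exists2 g : nat -> set T, (forall n, P (g n)) & \bigcap_(i in D) f i = \bigcap_n g n.
Proof.
move=> PT /pfcard_geP[->|[h]] Pf.
  by exists (fun=> setT) => //; rewrite bigcap_set0 bigcap_const.
exists (f \o h) => [n|]; first by apply: Pf; apply: funS.
by rewrite (reindex_bigcap h [set: nat]) //; exact: funS.
Qed.

Lemma second_countable_opene_base {T : topologicalType} :
  @second_countable T -> exists2 B : set (set T), countable B &
    B `<=` opene /\ forall U, opene U -> exists2 V, B V & V `<=` U.
Proof.
move=> [B cB [Bopen Bnbhs]]; exists (B `&` [set V | V !=set0]).
  exact: sub_countable (subset_card_le (@subIsetl _ _ _)) cB.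
split=> [V [BV V0]|U [oU [y Uy]]]; first by split; [exact: Bopen|].
have [V [BV Vy] VU] := Bnbhs y U (open_nbhs_nbhs (conj oU Uy)).
by exists V => //; split=> //; exists y.
Qed.

Section CompactPseudoMetric.
Context {R : realType} {X : pseudoMetricType R}.
Local Open Scope ring_scope.

Lemma open_dense_ball_subset (U : set X) (x : X) (e : {posnum R}) :
  open U -> dense U ->
  exists (y : X) (r : {posnum R}), ball y (r%:num *+ 2) `<=` ball x e%:num `&` U.
Proof.
move=> oU dU.
have ball0 : (ball x e%:num)° !=set0.
  by exists x; apply: nbhs_singleton; apply: nbhs_interior; exact: nbhsx_ballx.
have [y [y_ball Uy]] := dU _ ball0 (@open_interior _ _).
have : nbhs y ((ball x e%:num)° `&` U).
  by have := openI (@open_interior _ (ball x e%:num)) oU; rewrite openE; apply.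
move=> /nbhs_ballP[r r0 hr]; exists y, (PosNum (divr_gt0 r0 (ltr0n _ 2))).
move=> z /=; rewrite mulr2n -splitr => /hr[/interior_subset].
by split.
Qed.

Lemma compact_Baire (S : set X) : compact [set: X] -> Gdelta_dense S -> dense S.
Proof.
move=> cX [U oU ->] W [w Ww] oW.
have /nbhs_ballP[e e0 eW] : nbhs w W by move: oW; rewrite openE; apply.
pose B (p : X * {posnum R}) := ball p.1 p.2%:num.
(* The doubled radius leaves room for the cluster point of the centres to lie
   in every ball. *)
have step (np : nat * (X * {posnum R})) : exists q : X * {posnum R},
    ball q.1 (q.2%:num *+ 2) `<=` B np.2 `&` U np.1.
  case: np => n [x r]; have [y [r' yr']] := open_dense_ball_subset x r (oU n).1 (oU n).2.
  by exists (y, r').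
have [g hg] := choice step.
pose s := fix s n := if n is m.+1 then g (m, s m) else (w, PosNum e0).
have ball_double (p : X * {posnum R}) : B p `<=` ball p.1 (p.2%:num *+ 2).
  by apply: le_ball; rewrite mulr2n lerDl.
have s_succ n : B (s n.+1) `<=` B (s n) `&` U n.
  by move=> z /ball_double /(hg (n, s n)).
have s_nested k m : (k <= m)%N -> B (s m) `<=` B (s k).
  elim: m => [|m ih]; first by rewrite leqn0 => /eqP ->.
  rewrite leq_eqVlt => /orP[/eqP -> //|]; rewrite ltnS => /ih km z.
  by move=> /s_succ[/km].
have [p [_ clp]] := cX ((fun n => (s n).1) @ \oo) _ filterT.
have p_in k : B (s k) p /\ U k p.
  have [|y [sky py]] := clp (B (s k.+1)) (ball p (s k.+1).2%:num) _
      (nbhsx_ballx _ _ (gt0 (s k.+1).2)).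
    exists k.+1 => // m /= km; apply: s_nested km _ _; exact: ballxx.
  apply: (hg (k, s k)); rewrite mulr2n.
  exact: ball_triangle sky (ball_sym py).
by exists p; split; [exact: eW (p_in 0%N).1|move=> k _; exact: (p_in k).2].
Qed.

End CompactPseudoMetric.

Section PointedCompactPseudoMetric.
Context {R : realType} {X : pseudoMetricType R} (x0 : X).

(* [compact_second_countable] is only stated for pointed spaces. *)
Let Xp : Type := X.
HB.instance Definition _ := PseudoMetric.on Xp.
HB.instance Definition _ := isPointed.Build Xp x0.

Lemma compact_pseudoMetric_second_countable :
  compact [set: X] -> @second_countable X.
Proof. exact: (@compact_second_countable R Xp). Qed.

End PointedCompactPseudoMetric.

Lemma is_family_kfam (F : set (set nat)) : is_family (kfam F).
Proof. by move=> A B AB kA C FC; apply: subset_nonempty (kA C FC) => n [/AB]. Qed.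

Section Dynamics.
Context {X : topologicalType} (T : X -> X).

Lemma continuous_iter n : continuous T -> continuous (iter n T).
Proof.
move=> cT; elim: n => [|n ih] x; first exact: cvg_id.
exact: (continuous_comp (ih x) (cT _)).
Qed.

Lemma n_T_succ x U : n_T T (T x) U = n_T T x (T @^-1` U).
Proof. by apply/seteqP; split => n; rewrite /n_T /= -iterSr. Qed.

Lemma Tran_succ (G : set (set nat)) x : continuous T -> (forall y, exists x, T x = y) ->
  Tran G T x -> Tran G T (T x).
Proof.
move=> cT sT Gx U [oU [y Uy]]; rewrite n_T_succ; apply: Gx; split.
  by apply: open_comp => // z _; exact: cT.
by have [z zy] := sT y; exists z; rewrite /= zy.
Qed.

Lemma Tran_iter (G : set (set nat)) x n : continuous T -> (forall y, exists x, T x = y) ->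
  Tran G T x -> Tran G T (iter n T x).
Proof. by move=> cT sT Gx; elim: n => [//|n ih] /=; exact: Tran_succ. Qed.

Lemma Tran_dense (G : set (set nat)) : is_family G ->
  continuous T -> (forall y, exists x, T x = y) ->
  Tran G T !=set0 -> dense (Tran G T).
Proof.
move=> famG cT sT [x Gx] W W0 oW.
have [G0|nG0] := pselect (G set0).
  by rewrite (_ : Tran G T = setT) ?setIT // -subTset => y _ U _; exact: famG G0.
have [n Wn] : n_T T x W !=set0.
  by apply/set0P/negP => /eqP W0'; apply: nG0; rewrite -W0'; exact: Gx.
by exists (iter n T x); split => //; exact: Tran_iter.
Qed.

Lemma dense_Tran_transitive (G : set (set nat)) : is_family G ->
  dense (Tran G T) -> G_transitive G T.
Proof.
move=> famG dT U V [oU U0] oV; have [x [Ux Gx]] := dT U U0 oU.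
by apply: famG (Gx V oV) => n Vn; exists x.
Qed.

Definition hits (V : set X) (B : set nat) := \bigcup_(n in B) (iter n T @^-1` V).

Lemma open_hits V B : continuous T -> open V -> open (hits V B).
Proof.
move=> cT oV; apply: bigcup_open => n _; apply: open_comp => // x _.
exact: continuous_iter.
Qed.

Lemma dense_hits (F : set (set nat)) V B : G_transitive (kfam F) T ->
  opene V -> F B -> dense (hits V B).
Proof.
move=> trT oV FB W W0 oW.
have [n [[y [Wy Vy]] Bn]] := trT W V (conj oW W0) oV B FB.
by exists y; split => //; exists n.
Qed.

End Dynamics.

Section KfamTransitivePoints.
Variables (X : topologicalType) (T : X -> X) (F : set (set nat)).
Variables (Vs : set (set X)) (H : set (set nat)).
Hypotheses (cVs : countable Vs) (VsO : Vs `<=` opene)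
  (VsU : forall U, opene U -> exists2 V, Vs V & V `<=` U).
Hypotheses (cH : countable H) (HF : H `<=` F)
  (HA : forall A, F A -> exists2 B, H B & B `<=` A).
Hypothesis cT : continuous T.

Lemma Tran_kfam_bigcap : Tran (kfam F) T = \bigcap_(p in Vs `*` H) hits T p.1 p.2.
Proof.
apply/seteqP; split => [x Tx [V B] [/= VsV HB]|x hx U oU B FB].
  by have [n [Vn Bn]] := Tx V (VsO VsV) B (HF HB); exists n.
have [V VsV VU] := VsU oU; have [B' HB' B'B] := HA FB.
by have [n B'n Vn] := hx (V, B') (conj VsV HB'); exists n; split; [exact: VU|exact: B'B].
Qed.

Lemma Gdelta_Tran_kfam : Gdelta (Tran (kfam F) T).
Proof.
rewrite Tran_kfam_bigcap; apply: (bigcap_countable_nat openT (countableX cVs cH)).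
by move=> [V B] [/VsO[oV _] _]; exact: open_hits.
Qed.

Lemma transitive_Gdelta_dense_Tran_kfam :
  G_transitive (kfam F) T -> Gdelta_dense (Tran (kfam F) T).
Proof.
move=> trT; rewrite Tran_kfam_bigcap.
have denseT : open [set: X] /\ dense [set: X].
  by split=> [|W W0 _]; [exact: openT|rewrite setIT].
apply: (bigcap_countable_nat (P := fun S => open S /\ dense S) denseT (countableX cVs cH)).
by move=> [V B] [/VsO oV /HF FB]; split; [exact: open_hits oV.1|exact: dense_hits trT oV FB].
Qed.

End KfamTransitivePoints.

Theorem proposition3p3 (R : realType) (X : pseudoMetricType R) (T : X -> X)
    (F : set (set nat)) :
  dyn_system T -> is_family F -> has_countable_base F ->
  Gdelta (Tran (kfam F) T) /\
  [/\ (G_transitive (kfam F) T <-> dense (Tran (kfam F) T) /\ Gdelta (Tran (kfam F) T)),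
      (dense (Tran (kfam F) T) /\ Gdelta (Tran (kfam F) T) <-> Tran (kfam F) T !=set0) &
      (Tran (kfam F) T !=set0 <-> G_transitive (kfam F) T)].
Proof.
move=> [[_ cX] [x0 _] _ cT sT] _ [H [cH [HF HA]]].
have [Vs cVs [VsO VsU]] :=
  second_countable_opene_base (compact_pseudoMetric_second_countable x0 cX).
have Gd := Gdelta_Tran_kfam cVs VsO VsU cH HF HA cT.
have transitive_dense : G_transitive (kfam F) T -> dense (Tran (kfam F) T).
  move=> trT; apply: compact_Baire cX _.
  exact: transitive_Gdelta_dense_Tran_kfam cVs VsO VsU cH HF HA cT trT.
have dense_nonempty : dense (Tran (kfam F) T) -> Tran (kfam F) T !=set0.
  by move=> dT; have [y [_ Ty]] := dT setT (ex_intro _ x0 I) openT; exists y.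
have famK := @is_family_kfam F.
have nonempty_dense := Tran_dense famK cT sT.
split=> //; split; split.
- by move=> trT; split=> //; exact: transitive_dense.
- by case=> /(dense_Tran_transitive famK).
- by case=> dT _; exact: dense_nonempty.
- by move=> ne; split=> //; exact: nonempty_dense.
- by move=> ne; exact: dense_Tran_transitive famK (nonempty_dense ne).
- by move=> trT; exact: dense_nonempty (transitive_dense trT).
Qed.
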